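(* For every $\alpha\in(0,\pi]$, \[ P(S_\alpha)=\frac{1}{\sin\frac{\alpha}{2}}. \]
   Context: For $\alpha\in(0,2\pi)$ the angular domain is $S_\alpha=\{re^{it}: r>0,\ t\in(0,\alpha)\}\subset\mathbb{C}$; its boundary in $\overline{\mathbb{C}}=\mathbb{C}\cup\{\infty\}$ is the Jordan curve consisting of the two rays from $0$ together with the points $0$ and $\infty$. For four distinct points $a,b,c,d\in\overline{\mathbb{C}}$ set $p(a,b,c,d)=\frac{|a-b||c-d|+|a-d||b-c|}{|a-c||b-d|}$, where if one of the points is $\infty$ the expression is understood as the limit (all factors containing $\infty$ cancelled). For a domain $D\subset\overline{\mathbb{C}}$ whose boundary is a Jordan curve, $P(D)=\sup p(a,b,c,d)$ over all distinct $a,b,c,d\in\partial D$ occurring in this order when $\partial D$ is traversed in the positive direction. *)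

From Stdlib Require Import Reals Lra.
Open Scope R_scope.

(* Points of the Riemann sphere: [Some (x,y)] is x+iy, [None] is infinity. *)
Definition C := (R * R)%type.
Definition Cext := option C.

Definition cdist (z w : C) : R :=
  sqrt ((fst z - fst w)^2 + (snd z - snd w)^2).

(* p(a,b,c,d); if one point is infinity, all factors containing it are
   cancelled (this is the limit). *)
Definition pfun (a b c d : Cext) : R :=
  match a, b, c, d with
  | Some a, Some b, Some c, Some d =>
      (cdist a b * cdist c d + cdist a d * cdist b c) / (cdist a c * cdist b d)
  | None, Some b, Some c, Some d => (cdist c d + cdist b c) / cdist b d
  | Some a, None, Some c, Some d => (cdist c d + cdist a d) / cdist a c
  | Some a, Some b, None, Some d => (cdist a b + cdist a d) / cdist b d
  | Some a, Some b, Some c, None => (cdist a b + cdist b c) / cdist a c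
  | _, _, _, _ => 0  (* not used: at most one point is infinity *)
  end.

(* Parametrization of the boundary of S_alpha (the Jordan curve made of the
   two rays, 0 and infinity), in the positive direction (domain on the left):
   parameter s < 0 gives |s| e^{i alpha} (coming in from infinity along the
   ray of angle alpha), s = 0 gives 0, s > 0 gives s on the positive real
   axis, and the extra parameter [None] (= +infinity) gives the point infinity.
   This is a bijection from option R onto the boundary of S_alpha. *)
Definition bpt (alpha : R) (k : option R) : Cext :=
  match k with
  | None => None
  | Some s =>
      if Rlt_dec s 0 then Some ((- s) * cos alpha, (- s) * sin alpha)
      else Some (s, 0)
  end.

Definition klt (k1 k2 : option R) : Prop :=
  match k1, k2 with
  | Some x, Some y => x < y
  | Some _, None => True
  | None, _ => False
  end.

Definition kinc (k1 k2 k3 k4 : option R) : Prop :=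
  klt k1 k2 /\ klt k2 k3 /\ klt k3 k4.

(* four distinct boundary points occur in this (cyclic) order when the curve
   is traversed in the positive direction *)
Definition pos_order (k1 k2 k3 k4 : option R) : Prop :=
  kinc k1 k2 k3 k4 \/ kinc k2 k3 k4 k1 \/ kinc k3 k4 k1 k2 \/ kinc k4 k1 k2 k3.

Definition Pvals (alpha : R) (v : R) : Prop :=
  exists k1 k2 k3 k4 : option R,
    pos_order k1 k2 k3 k4 /\
    v = pfun (bpt alpha k1) (bpt alpha k2) (bpt alpha k3) (bpt alpha k4).

Definition P_is (alpha : R) (l : R) : Prop := is_lub (Pvals alpha) l.

From Stdlib Require Import Reals Lra Psatz.
Open Scope R_scope.

(* Write w = e^{i alpha}. A boundary point is l + m w with l, m >= 0 and l m = 0, and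
   the difference of two boundary points in positive order is l - m w with l, m >= 0:
   it lies in the cone of opening pi - alpha spanned by 1 and -w. For a quadruple
   a, b, c, d in this order the Ptolemy terms u = (a-b)(c-d) and v = (a-d)(b-c) satisfy
   u + v = (a-c)(b-d), so p(a,b,c,d) = (|u| + |v|) / |u + v|, and u conj(v) is a product
   of an element of the cone by the conjugate of another one. Hence the angle between
   u and v is at most pi - alpha, and the law of cosines bounds the ratio by
   1 / sin(alpha/2). The bound is attained at (w, 0, 1, infinity). *)

Lemma cdist_sym z w : cdist z w = cdist w z.
Proof. unfold cdist. f_equal. ring. Qed.

Lemma pfun_rotate a b c d : pfun a b c d = pfun b c d a.
Proof.
  destruct a as [a|], b as [b|], c as [c|], d as [d|]; simpl; try reflexivity.
  all: repeat match goal with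
         | |- context [cdist ?y ?x] =>
             match goal with |- context [cdist x y] => rewrite (cdist_sym y x) end
         end.
  all: f_equal; ring.
Qed.

Definition pospart (x : R) : R := if Rlt_dec x 0 then 0 else x.
Definition negpart (x : R) : R := if Rlt_dec x 0 then - x else 0.

Lemma bpt_Some alpha x :
  bpt alpha (Some x) = Some (pospart x + negpart x * cos alpha, negpart x * sin alpha).
Proof. unfold bpt, pospart, negpart. destruct (Rlt_dec x 0); do 2 f_equal; ring. Qed.

Lemma pospart_sub_negpart x : pospart x - negpart x = x.
Proof. unfold pospart, negpart. destruct (Rlt_dec x 0); ring. Qed.

Lemma pospart_le x y : x < y -> pospart x <= pospart y.
Proof. unfold pospart. destruct (Rlt_dec x 0), (Rlt_dec y 0); lra. Qed.

Lemma negpart_le x y : x < y -> negpart y <= negpart x.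
Proof. unfold negpart. destruct (Rlt_dec x 0), (Rlt_dec y 0); lra. Qed.

Lemma pospart_negpart_incr_disjoint x y z : x < y -> y < z ->
  (pospart y - pospart x) * (negpart y - negpart z) = 0.
Proof.
  unfold pospart, negpart.
  destruct (Rlt_dec x 0), (Rlt_dec y 0), (Rlt_dec z 0); intros; first [lra | ring].
Qed.

(* [cone_sqnorm (cos alpha) l m] is |l - m e^{i alpha}|^2. *)
Definition cone_sqnorm (c l m : R) : R := l * l + m * m - 2 * c * l * m.

Lemma cdist_cone c s lx mx ly my : c * c + s * s = 1 ->
  cdist (lx + mx * c, mx * s) (ly + my * c, my * s) = sqrt (cone_sqnorm c (ly - lx) (mx - my)).
Proof.
  intro Hcs. unfold cdist; cbn [fst snd]. f_equal.
  replace ((mx * s - my * s) ^ 2) with ((mx - my) ^ 2 * (s * s)) by ring.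
  replace (s * s) with (1 - c * c) by lra. unfold cone_sqnorm. ring.
Qed.

Lemma cone_sqnorm_ge0 c l m : -1 <= c <= 1 -> 0 <= l -> 0 <= m -> 0 <= cone_sqnorm c l m.
Proof.
  intros Hc Hl Hm. unfold cone_sqnorm.
  assert (0 <= (1 - c) * ((l + m) * (l + m))) by (apply Rmult_le_pos; [lra | apply Rle_0_sqr]).
  assert (0 <= (1 + c) * ((l - m) * (l - m))) by (apply Rmult_le_pos; [lra | apply Rle_0_sqr]).
  nra.
Qed.

Lemma cone_sqnorm_gt0 c l m : -1 <= c < 1 -> 0 <= l -> 0 <= m -> 0 < l + m ->
  0 < cone_sqnorm c l m.
Proof.
  intros Hc Hl Hm Hlm. unfold cone_sqnorm.
  assert (0 < (1 - c) * ((l + m) * (l + m))) by (apply Rmult_lt_0_compat; nra).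
  assert (0 <= (1 + c) * ((l - m) * (l - m))) by (apply Rmult_le_pos; [lra | apply Rle_0_sqr]).
  nra.
Qed.

Lemma Rsqr_le_nonneg a b : 0 <= b -> a * a <= b * b -> a <= b.
Proof. intros. nra. Qed.

(* Law of cosines: |u + v|^2 = |u|^2 + |v|^2 + 2 Re (u conj v), and the angle between
   u and v is at most pi - alpha exactly when Re (u conj v) + cos alpha |u| |v| >= 0. *)
Lemma add_norms_div_norm_add_le c sh x y z Re_uv :
  -1 <= c -> 0 < sh -> sh * sh = (1 - c) / 2 ->
  0 <= x -> 0 <= y -> 0 < z -> z * z = x * x + y * y + 2 * Re_uv ->
  0 <= Re_uv + c * (x * y) -> (x + y) / z <= 1 / sh.
Proof.
  intros Hc Hsh Hsh2 Hx Hy Hz Hzz Hangle.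
  assert (Hsq : (x + y) * sh <= z).
  { apply Rsqr_le_nonneg; [lra |].
    replace ((x + y) * sh * ((x + y) * sh)) with ((x + y) * (x + y) * (sh * sh)) by ring.
    rewrite Hsh2, Hzz.
    assert (0 <= (1 + c) * ((x - y) * (x - y))) by (apply Rmult_le_pos; [lra | apply Rle_0_sqr]).
    nra. }
  apply (Rmult_le_reg_r (z * sh)); [nra |].
  replace ((x + y) / z * (z * sh)) with ((x + y) * sh) by (field; lra).
  replace (1 / sh * (z * sh)) with z by (field; lra).
  exact Hsq.
Qed.

(* For a complex number Re + i s J with s = sin alpha >= 0: argument in
   [-(pi - alpha), pi - alpha], expressed without the modulus, implies
   Re + cos alpha * modulus >= 0. *)
Lemma angle_bound_modulus c s Re_uv J M :
  c * c + s * s = 1 -> 0 <= s -> 0 <= M -> M * M = Re_uv * Re_uv + (1 - c * c) * (J * J) ->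
  0 <= Re_uv + c * Rabs J -> (c < 0 -> 0 <= Re_uv) -> 0 <= Re_uv + c * M.
Proof.
  intros Hcs Hs HM HMM Hangle Hobtuse.
  assert (HJ : Rabs J * Rabs J = J * J) by (rewrite <- Rabs_mult; apply Rabs_right; nra).
  assert (HJ0 := Rabs_pos J).
  destruct (Rle_lt_dec 0 c) as [Hc0 | Hc0].
  - assert (Hcs_bound : - c * Re_uv + s * s * Rabs J <= M).
    { apply Rsqr_le_nonneg; [exact HM |]. rewrite HMM.
      replace (1 - c * c) with (s * s) by lra.
      assert (0 <= (s * Re_uv + c * s * Rabs J) * (s * Re_uv + c * s * Rabs J)) by apply Rle_0_sqr.
      rewrite <- HJ.
      replace (Re_uv * Re_uv) with ((c * c + s * s) * (Re_uv * Re_uv)) by (rewrite Hcs; ring).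
      nra. }
    assert (0 <= s * s * (Re_uv + c * Rabs J)) by (apply Rmult_le_pos; nra).
    assert (c * (- c * Re_uv + s * s * Rabs J) <= c * M) by (apply Rmult_le_compat_l; lra).
    assert (Re_uv = (c * c + s * s) * Re_uv) by (rewrite Hcs; ring).
    nra.
  - specialize (Hobtuse Hc0).
    assert (- c * M <= Re_uv).
    { apply Rsqr_le_nonneg; [exact Hobtuse |].
      replace (- c * M * (- c * M)) with (c * c * (M * M)) by ring. rewrite HMM.
      assert (c * c * (J * J) <= Re_uv * Re_uv).
      { rewrite <- HJ.
        replace (c * c * (Rabs J * Rabs J)) with ((- c * Rabs J) * (- c * Rabs J)) by ring.
        apply Rmult_le_compat; nra. }
      nra. }
    lra.
Qed.

(* The product (p - q w)(r - q' conj w) of an element of the cone by the conjugate of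
   another one, with w = e^{i alpha}, c = cos alpha: its real part is [Re] below and its
   imaginary part is sin alpha times [p q' - q r]. *)
Lemma cone_product_angle c p q r q' : -1 <= c <= 1 ->
  0 <= p -> 0 <= q -> 0 <= r -> 0 <= q' ->
  let Re := p * r + q * q' - c * (p * q' + q * r) in
  0 <= Re + c * Rabs (p * q' - q * r) /\ (c < 0 -> 0 <= Re).
Proof.
  intros Hc Hp Hq Hr Hq' Re. unfold Re. split.
  - destruct (Rcase_abs (p * q' - q * r)) as [Hn | Hn].
    + rewrite Rabs_left by exact Hn.
      assert (Hamgm : 2 * (p * q') <= p * r + q * q').
      { destruct (Rle_lt_dec (p * q') 0); [nra |].
        apply Rsqr_le_nonneg; [nra |].
        assert (0 <= (p * r - q * q') * (p * r - q * q')) by apply Rle_0_sqr.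
        assert (p * q' * (p * q') <= p * q' * (q * r)) by (apply Rmult_le_compat_l; lra).
        nra. }
      assert (0 <= p * q') by nra.
      destruct (Rle_lt_dec 0 c); nra.
    + rewrite Rabs_right by exact Hn.
      assert (Hamgm : 2 * (q * r) <= p * r + q * q').
      { destruct (Rle_lt_dec (q * r) 0); [nra |].
        apply Rsqr_le_nonneg; [nra |].
        assert (0 <= (p * r - q * q') * (p * r - q * q')) by apply Rle_0_sqr.
        assert (q * r * (q * r) <= q * r * (p * q')) by (apply Rmult_le_compat_l; lra).
        nra. }
      assert (0 <= q * r) by nra.
      destruct (Rle_lt_dec 0 c); nra.
  - intros. assert (0 <= p * q' + q * r) by nra. nra.
Qed.

Lemma sqrt_mul_sqr A B : 0 <= A -> 0 <= B -> (sqrt A * sqrt B) * (sqrt A * sqrt B) = A * B.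
Proof.
  intros HA HB.
  replace (sqrt A * sqrt B * (sqrt A * sqrt B)) with ((sqrt A * sqrt A) * (sqrt B * sqrt B)) by ring.
  rewrite !sqrt_sqrt; lra.
Qed.

(* Here A B, C D, E F are |u|^2, |v|^2, |u + v|^2 for the Ptolemy terms u, v. *)
Lemma ptolemy_ratio_le c s sh A B C D E F Re_uv J :
  c * c + s * s = 1 -> -1 <= c -> 0 <= s -> 0 < sh -> sh * sh = (1 - c) / 2 ->
  0 <= A -> 0 <= B -> 0 <= C -> 0 <= D -> 0 < E -> 0 < F ->
  E * F = A * B + C * D + 2 * Re_uv ->
  A * B * (C * D) = Re_uv * Re_uv + (1 - c * c) * (J * J) ->
  0 <= Re_uv + c * Rabs J -> (c < 0 -> 0 <= Re_uv) ->
  (sqrt A * sqrt B + sqrt C * sqrt D) / (sqrt E * sqrt F) <= 1 / sh.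
Proof.
  intros Hcs Hc Hs Hsh Hsh2 HA HB HC HD HE HF Hsum Hprod Hangle Hobtuse.
  assert (Hx := sqrt_mul_sqr A B HA HB). assert (Hy := sqrt_mul_sqr C D HC HD).
  assert (Hz := sqrt_mul_sqr E F (Rlt_le _ _ HE) (Rlt_le _ _ HF)).
  apply (add_norms_div_norm_add_le c sh _ _ _ Re_uv); try assumption.
  - apply Rmult_le_pos; apply sqrt_pos.
  - apply Rmult_le_pos; apply sqrt_pos.
  - apply Rmult_lt_0_compat; apply sqrt_lt_R0; lra.
  - rewrite Hx, Hy, Hz. exact Hsum.
  - apply (angle_bound_modulus c s Re_uv J); try assumption.
    + apply Rmult_le_pos; apply Rmult_le_pos; apply sqrt_pos.
    + rewrite <- Hprod, <- Hx, <- Hy. ring.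
Qed.

Section ConeQuadruple.

Variables c s sh : R.
Hypothesis Hcs : c * c + s * s = 1.
Hypothesis Hc : -1 <= c < 1.
Hypothesis Hs : 0 <= s.
Hypothesis Hsh : 0 < sh.
Hypothesis Hsh2 : sh * sh = (1 - c) / 2.

Let N := cone_sqnorm c.

(* Consecutive differences of four points in positive order: l_i, m_i >= 0, and the
   motion along the ray e^{i alpha} stops before the motion along [0, +oo) starts. *)
Lemma pfun_cone_bound4 l1 l2 l3 m1 m2 m3 :
  0 <= l1 -> 0 <= l2 -> 0 <= l3 -> 0 <= m1 -> 0 <= m2 -> 0 <= m3 ->
  l1 * m2 = 0 -> l2 * m3 = 0 -> l1 * m3 = 0 ->
  0 < l1 + l2 + (m1 + m2) -> 0 < l2 + l3 + (m2 + m3) ->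
  (sqrt (N l1 m1) * sqrt (N l3 m3) + sqrt (N (l1 + l2 + l3) (m1 + m2 + m3)) * sqrt (N l2 m2))
  / (sqrt (N (l1 + l2) (m1 + m2)) * sqrt (N (l2 + l3) (m2 + m3))) <= 1 / sh.
Proof.
  intros L1 L2 L3 M1 M2 M3 P12 P23 P13 D1 D2. unfold N.
  set (p := l1 * l2 + m1 * m2). set (q := m1 * l2).
  set (r := l3 * (l1 + l2 + l3) + m3 * (m1 + m2 + m3) - 2 * c * m3 * (l1 + l2 + l3)).
  set (q' := l3 * (m1 + m2 + m3) - m3 * (l1 + l2 + l3)).
  assert (Hp : 0 <= p) by (unfold p; nra).
  assert (Hq : 0 <= q) by (unfold q; nra).
  assert (Hrq' : 0 <= r /\ 0 <= q').
  { unfold r, q'.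
    destruct (Rmult_integral _ _ P23) as [E2 | E2], (Rmult_integral _ _ P13) as [E3 | E3];
      subst; split; try nra.
    all: assert (0 <= (l3 - m3) * (l3 - m3)) by apply Rle_0_sqr;
      assert (0 <= (1 - c) * (l3 * m3)) by (apply Rmult_le_pos; nra);
      assert (0 <= m3 * (m1 + m2)) by nra; nra. }
  destruct Hrq' as [Hr Hq'].
  destruct (cone_product_angle c p q r q' ltac:(lra) Hp Hq Hr Hq') as [Hangle Hobtuse].
  apply (ptolemy_ratio_le c s sh _ _ _ _ _ _
           (p * r + q * q' - c * (p * q' + q * r)) (p * q' - q * r)); try assumption; try lra.
  all: try (apply cone_sqnorm_ge0; lra).
  all: try (apply cone_sqnorm_gt0; lra).
  all: unfold p, q, r, q', cone_sqnorm; clear - P12 P23 P13;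
    destruct (Rmult_integral _ _ P12) as [E1 | E1], (Rmult_integral _ _ P23) as [E2 | E2],
      (Rmult_integral _ _ P13) as [E3 | E3]; subst; ring.
Qed.

(* The same with the fourth point at infinity, where p(a,b,c,oo) = (|a-b| + |b-c|) / |a-c|. *)
Lemma pfun_cone_bound3 l1 l2 m1 m2 :
  0 <= l1 -> 0 <= l2 -> 0 <= m1 -> 0 <= m2 -> l1 * m2 = 0 -> 0 < l1 + l2 + (m1 + m2) ->
  (sqrt (N l1 m1) + sqrt (N l2 m2)) / sqrt (N (l1 + l2) (m1 + m2)) <= 1 / sh.
Proof.
  intros L1 L2 M1 M2 P12 D1. unfold N.
  set (p := l1 * l2 + m1 * m2). set (q := m1 * l2).
  assert (Hp : 0 <= p) by (unfold p; nra).
  assert (Hq : 0 <= q) by (unfold q; nra).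
  destruct (cone_product_angle c p q 1 0 ltac:(lra) Hp Hq ltac:(lra) ltac:(lra))
    as [Hangle Hobtuse].
  rewrite <- (Rmult_1_r (sqrt (cone_sqnorm c l1 m1))),
    <- (Rmult_1_r (sqrt (cone_sqnorm c l2 m2))),
    <- (Rmult_1_r (sqrt (cone_sqnorm c (l1 + l2) (m1 + m2)))).
  rewrite <- sqrt_1 at 1 2 3.
  apply (ptolemy_ratio_le c s sh _ _ _ _ _ _
           (p * 1 + q * 0 - c * (p * 0 + q * 1)) (p * 0 - q * 1)); try assumption; try lra.
  all: try (apply cone_sqnorm_ge0; lra).
  all: try (apply cone_sqnorm_gt0; lra).
  all: unfold p, q, cone_sqnorm; clear - P12;
    destruct (Rmult_integral _ _ P12) as [E1 | E1]; subst; ring.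
Qed.

End ConeQuadruple.

Lemma angle_trig_facts alpha : 0 < alpha -> alpha <= PI ->
  cos alpha * cos alpha + sin alpha * sin alpha = 1 /\ -1 <= cos alpha < 1 /\
  0 <= sin alpha /\ 0 < sin (alpha / 2) /\ sin (alpha / 2) * sin (alpha / 2) = (1 - cos alpha) / 2.
Proof.
  intros H0 H1.
  assert (Hsh : 0 < sin (alpha / 2)) by (apply sin_gt_0; lra).
  assert (Hc : cos alpha = 1 - 2 * sin (alpha / 2) * sin (alpha / 2)).
  { replace alpha with (2 * (alpha / 2)) at 1 by field. apply cos_2a_sin. }
  assert (Hb := COS_bound alpha).
  assert (Hs := sin_ge_0 alpha ltac:(lra) H1).
  assert (H2 := sin2_cos2 alpha). unfold Rsqr in H2.
  repeat split; try lra. nra.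
Qed.

Lemma pfun_kinc_le alpha k1 k2 k3 k4 : 0 < alpha -> alpha <= PI -> kinc k1 k2 k3 k4 ->
  pfun (bpt alpha k1) (bpt alpha k2) (bpt alpha k3) (bpt alpha k4) <= 1 / sin (alpha / 2).
Proof.
  intros H0 H1 [K12 [K23 K34]].
  destruct (angle_trig_facts alpha H0 H1) as [Hcs [Hc [Hs [Hsh Hsh2]]]].
  destruct k1 as [x1 |]; [| contradiction]. destruct k2 as [x2 |]; [| contradiction].
  destruct k3 as [x3 |]; [| contradiction]. simpl in K12, K23.
  assert (A1 := pospart_sub_negpart x1). assert (A2 := pospart_sub_negpart x2).
  assert (A3 := pospart_sub_negpart x3).
  assert (G1 := pospart_le _ _ K12). assert (G2 := pospart_le _ _ K23).
  assert (N1 := negpart_le _ _ K12). assert (N2 := negpart_le _ _ K23).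
  assert (P12 := pospart_negpart_incr_disjoint _ _ _ K12 K23).
  destruct k4 as [x4 |]; rewrite !bpt_Some.
  - simpl in K34. assert (A4 := pospart_sub_negpart x4).
    assert (G3 := pospart_le _ _ K34). assert (N3 := negpart_le _ _ K34).
    assert (P23 := pospart_negpart_incr_disjoint _ _ _ K23 K34).
    assert (P14 := pospart_negpart_incr_disjoint _ _ _ K12 (Rlt_trans _ _ _ K23 K34)).
    assert (P13 : (pospart x2 - pospart x1) * (negpart x3 - negpart x4) = 0).
    { destruct (Rmult_integral _ _ P14) as [E | E]; [rewrite E; ring |].
      replace (negpart x3 - negpart x4) with 0 by lra. ring. }
    cbn [pfun]. rewrite !(cdist_cone (cos alpha) (sin alpha)) by exact Hcs.
    replace (pospart x4 - pospart x1) with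
      ((pospart x2 - pospart x1) + (pospart x3 - pospart x2) + (pospart x4 - pospart x3)) by ring.
    replace (negpart x1 - negpart x4) with
      ((negpart x1 - negpart x2) + (negpart x2 - negpart x3) + (negpart x3 - negpart x4)) by ring.
    replace (pospart x3 - pospart x1) with ((pospart x2 - pospart x1) + (pospart x3 - pospart x2))
      by ring.
    replace (negpart x1 - negpart x3) with ((negpart x1 - negpart x2) + (negpart x2 - negpart x3))
      by ring.
    replace (pospart x4 - pospart x2) with ((pospart x3 - pospart x2) + (pospart x4 - pospart x3))
      by ring.
    replace (negpart x2 - negpart x4) with ((negpart x2 - negpart x3) + (negpart x3 - negpart x4))
      by ring.
    apply (pfun_cone_bound4 _ (sin alpha)); try assumption; lra.
  - cbn [pfun bpt]. rewrite !(cdist_cone (cos alpha) (sin alpha)) by exact Hcs.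
    replace (pospart x3 - pospart x1) with ((pospart x2 - pospart x1) + (pospart x3 - pospart x2))
      by ring.
    replace (negpart x1 - negpart x3) with ((negpart x1 - negpart x2) + (negpart x2 - negpart x3))
      by ring.
    apply (pfun_cone_bound3 _ (sin alpha)); try assumption; lra.
Qed.

Lemma pfun_pos_order_le alpha k1 k2 k3 k4 : 0 < alpha -> alpha <= PI ->
  pos_order k1 k2 k3 k4 ->
  pfun (bpt alpha k1) (bpt alpha k2) (bpt alpha k3) (bpt alpha k4) <= 1 / sin (alpha / 2).
Proof.
  intros H0 H1 [K | [K | [K | K]]].
  - exact (pfun_kinc_le _ _ _ _ _ H0 H1 K).
  - rewrite pfun_rotate. exact (pfun_kinc_le _ _ _ _ _ H0 H1 K).
  - rewrite 2!pfun_rotate. exact (pfun_kinc_le _ _ _ _ _ H0 H1 K).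
  - rewrite 3!pfun_rotate. exact (pfun_kinc_le _ _ _ _ _ H0 H1 K).
Qed.

Lemma pfun_extremal alpha : 0 < alpha -> alpha <= PI ->
  pfun (bpt alpha (Some (-1))) (bpt alpha (Some 0)) (bpt alpha (Some 1)) (bpt alpha None)
  = 1 / sin (alpha / 2).
Proof.
  intros H0 H1.
  destruct (angle_trig_facts alpha H0 H1) as [Hcs [Hc [Hs [Hsh Hsh2]]]].
  unfold bpt. destruct (Rlt_dec (-1) 0); [| lra].
  destruct (Rlt_dec 0 0); [lra |]. destruct (Rlt_dec 1 0); [lra |].
  cbn [pfun]. unfold cdist; cbn [fst snd].
  replace ((- -1 * cos alpha - 0) ^ 2 + (- -1 * sin alpha - 0) ^ 2) with 1 by nra.
  replace ((0 - 1) ^ 2 + (0 - 0) ^ 2) with 1 by ring.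
  replace ((- -1 * cos alpha - 1) ^ 2 + (- -1 * sin alpha - 0) ^ 2)
    with ((2 * sin (alpha / 2)) * (2 * sin (alpha / 2))) by nra.
  rewrite sqrt_1, sqrt_square by lra. field. lra.
Qed.

Theorem theorem3p6 (alpha : R) (h0 : 0 < alpha) (h1 : alpha <= PI) :
  P_is alpha (1 / sin (alpha / 2)).
Proof.
  split.
  - intros v [k1 [k2 [k3 [k4 [Horder ->]]]]].
    exact (pfun_pos_order_le _ _ _ _ _ h0 h1 Horder).
  - intros b Hb. rewrite <- (pfun_extremal alpha h0 h1). apply Hb.
    exists (Some (-1)), (Some 0), (Some 1), None. split; [| reflexivity].
    left. repeat split; simpl; lra.
Qed.
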